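(* If a graph $H$ has no isolated vertex, then its 2-subdivision graph $S_2(H)$ (with respect to any function $\alpha: L_H\to\mathbb{N}$) is a DPDP-graph.
   Context: Graphs are finite and may have multiple edges and loops. A leaf is a vertex of degree one; $L_H$ is the set of leaves of $H$. A set $D\subseteq V(G)$ is dominating if every vertex outside $D$ has a neighbor in $D$; $P$ is paired-dominating if it is dominating and the subgraph induced by $P$ has a perfect matching. A DPDP-graph is a graph $G$ admitting disjoint sets $D,P$ with $V(G)=D\cup P$, $D$ dominating and $P$ paired-dominating. 2-subdivision graph: for a graph $H$ with no isolated vertex and $\alpha:L_H\to\mathbb{N}=\{1,2,\dots\}$, $S_2(H)$ has vertex set $(V_H\setminus L_H)\cup\{(v,i): v\in L_H, 1\le i\le \alpha(v)\}$ together with two new vertices for each edge $e$ of $H$ ($u_e,v_e$ if $e$ joins $u\ne v$; $v_e^1,v_e^2$ if $e$ is a loop at $v$). Its edges are: the edge joining the two new vertices of each $e$; for $v\in V_H\setminus L_H$, $vv_e$ for each non-loop edge $e$ at $v$ and $vv_e^1,vv_e^2$ for each loop $e$ at $v$; for $v\in L_H$ with incident edge $e$, the edges $v_e(v,i)$, $1\le i\le\alpha(v)$. *)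

From HB Require Import structures.
From mathcomp Require Import all_boot.
Set Implicit Arguments. Unset Strict Implicit. Unset Printing Implicit Defensive.

Section SimpleGraphs.
Variables (T : finType) (adj : rel T).

Definition dominating (D : {set T}) : Prop :=
  forall x, x \notin D -> exists2 y, y \in D & adj x y.

Definition perfect_matching_induced (P : {set T}) (M : {set {set T}}) : Prop :=
  (forall m, m \in M -> exists x y, [/\ m = [set x; y], x != y, adj x y,
                                      x \in P & y \in P]) /\
  (forall x, x \in P -> #|[set m in M | x \in m]| = 1).

Definition paired_dominating (P : {set T}) : Prop :=
  dominating P /\ exists M, perfect_matching_induced P M.

Definition DPDP_graph : Prop :=
  exists D P : {set T}, [/\ [disjoint D & P], D :|: P = setT,
                           dominating D & paired_dominating P].
End SimpleGraphs.

(* A loop contributes 2 to the degree. *)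
Section Multigraph.
Variables (V E : finType) (ends : E -> V * V).

Definition endpt (e : E) (b : bool) : V := if b then (ends e).2 else (ends e).1.

Definition mdeg (v : V) : nat :=
  #|[set e | (ends e).1 == v]| + #|[set e | (ends e).2 == v]|.

Definition leafH (v : V) : bool := mdeg v == 1.

Definition no_isolated : Prop := forall v, mdeg v != 0.

(* ---------- The 2-subdivision graph S_2(H) w.r.t. alpha ----------
   Vertices:  non-leaf vertices of H;
              pairs (v,i) with v a leaf and i : 'I_(alpha v)  (i.e. copies
              1..alpha v, shifted to 0..alpha v - 1);
              for each edge e two new vertices (e,false) and (e,true);
              (e,false) is the new vertex on the side of (ends e).1 and
              (e,true) the one on the side of (ends e).2 (for a loop at v
              these are v_e^1, v_e^2). *)
Variable alpha : V -> nat.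

Definition S2vert : finType :=
  (({v : V | ~~ leafH v} + {p : {v : V & 'I_(alpha v)} | leafH (tag p)})
   + (E * bool))%type.

Definition orig (w : {v : V | ~~ leafH v} + {p : {v : V & 'I_(alpha v)} | leafH (tag p)}) : V :=
  match w with inl v => val v | inr p => tag (val p) end.

Definition S2adj : rel S2vert := fun x y =>
  match x, y with
  | inr (e, b), inr (e', b') => (e == e') && (b != b')
  | inl w, inr (e, b) => orig w == endpt e b
  | inr (e, b), inl w => orig w == endpt e b
  | inl _, inl _ => false
  end.
End Multigraph.

(* The old vertices of S_2(H) and the subdivision vertices partition it. Every
   subdivision vertex (e, b) sees a copy of the end of e on its side, so the old
   vertices dominate; every old vertex lies on some edge of H since H has no
   isolated vertex, so the subdivision vertices dominate, and they are perfectly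
   matched by the middle edges (e, false) -- (e, true). *)
From mathcomp Require Import all_boot.

Set Implicit Arguments.
Unset Strict Implicit.
Unset Printing Implicit Defensive.

Section TwoSubdivision.
Variables (V E : finType) (ends : E -> V * V) (alpha : V -> nat).

Local Notation T := (S2vert ends alpha).
Local Notation adj := (@S2adj V E ends alpha).
Local Notation orig := (@orig V E ends alpha).

Definition is_old (x : T) : bool := if x is inl _ then true else false.

Definition old_vertices : {set T} := [set x | is_old x].

Definition subdivision_vertices : {set T} := [set x | ~~ is_old x].

Definition middle_edge (e : E) : {set T} := [set inr (e, false); inr (e, true)].

Lemma old_subdivision_disjoint : [disjoint old_vertices & subdivision_vertices].
Proof. by apply/pred0P => x /=; rewrite !inE; case: (is_old x). Qed.

Lemma old_subdivision_cover : old_vertices :|: subdivision_vertices = setT.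
Proof. by apply/setP => x; rewrite !inE; case: (is_old x). Qed.

Lemma exists_old_copy (v : V) :
  (leafH ends v -> 0 < alpha v) -> exists w, orig w = v.
Proof.
move=> alpha_gt0; case lv: (leafH ends v).
- by exists (inr (exist _ (existT _ v (Ordinal (alpha_gt0 lv))) lv)).
- by exists (inl (exist _ v (negbT lv))).
Qed.

Lemma exists_incident_end (v : V) :
  mdeg ends v != 0 -> exists e b, endpt ends e b = v.
Proof.
rewrite /mdeg -lt0n addn_gt0 => /orP[] /card_gt0P[e]; rewrite inE => /eqP ev.
- by exists e, false.
- by exists e, true.
Qed.

Lemma old_vertices_dominating :
  (forall v, leafH ends v -> 0 < alpha v) -> dominating adj old_vertices.
Proof.
move=> alpha_gt0 [w|[e b]]; rewrite inE //= => _.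
have [w' w'v] := exists_old_copy (alpha_gt0 (endpt ends e b)).
by exists (inl w'); rewrite ?inE //= w'v.
Qed.

Lemma subdivision_vertices_dominating :
  no_isolated ends -> dominating adj subdivision_vertices.
Proof.
move=> noiso [w|[e b]]; rewrite inE //= => _.
have [e' [b' e'w]] := exists_incident_end (noiso (orig w)).
by exists (inr (e', b')); rewrite ?inE //= e'w.
Qed.

Lemma middle_edges_perfect_matching :
  perfect_matching_induced adj subdivision_vertices [set middle_edge e | e : E].
Proof.
split.
- move=> _ /imsetP[e _ ->].
  exists (inr (e, false)), (inr (e, true)); split; rewrite ?inE //=.
  + by apply/eqP => -[].
  + by rewrite eqxx.
- move=> [w|[e b]]; rewrite inE //= => _.
  rewrite (_ : [set m in _ | _] = [set middle_edge e]) ?cards1 //.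
  apply/setP => m; rewrite !inE; apply/andP/eqP => [[]|->].
  + by case/imsetP => e' _ ->; rewrite !inE => /orP[] /eqP[-> _].
  + by rewrite imset_f //= !inE; case: b; rewrite eqxx ?orbT.
Qed.

Lemma subdivision_vertices_paired_dominating :
  no_isolated ends -> paired_dominating adj subdivision_vertices.
Proof.
move=> noiso; split; first exact: subdivision_vertices_dominating.
by exists [set middle_edge e | e : E]; exact: middle_edges_perfect_matching.
Qed.

End TwoSubdivision.

Theorem proposition4p4 (V E : finType) (ends : E -> V * V) (alpha : V -> nat) :
  no_isolated ends ->
  (forall v, leafH ends v -> 0 < alpha v) ->
  DPDP_graph (@S2adj V E ends alpha).
Proof.
move=> noiso alpha_gt0.
exists (old_vertices ends alpha), (subdivision_vertices ends alpha); split.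
- exact: old_subdivision_disjoint.
- exact: old_subdivision_cover.
- exact: old_vertices_dominating.
- exact: subdivision_vertices_paired_dominating.
Qed.
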